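(* There exist constants $\mu_0\in(0,1/10)$ and $c>0$, independent of $\mu$, $\varepsilon$ and $\Gamma_0$, with the following property. Let $0<\mu\le\mu_0$ and $\varepsilon\in(0,1)$. Let $q(f)$ be a solution of the ER3BP (with $q=(x-1+\mu,y,z)$) transiting through the Hill's sphere of $P_2$ in the interval $[f_1,f_2]$, i.e. $\|q(f_1)\|=\|q(f_2)\|=\mu^{1/3}$ and $0<\|q(f)\|<\mu^{1/3}$ for all $f\in(f_1,f_2)$, and let $(u(s),\phi(s),U(s),\Phi(s))$ be a solution of the Hamilton equations of the regularized Hamiltonian $\mathcal{K}$ satisfying $l(u,U)=0$ and $\mathcal{K}=0$, related to $q$ by $\phi(s)=f(s)$, $\mathrm{d}f/\mathrm{d}s=\|u(s)\|^2$ and $\pi(u(s))=q(f(s))$ for $s\in[s_1,s_2]$, where $f(s_1)=f_1$, $f(s_2)=f_2$. Set $\Gamma_s=\Gamma(\phi(s),\Phi(s))$ and $\Gamma_0=\Gamma_{s_1}$. If $\Gamma_0>0$ and $\mu<c(1-\varepsilon)^6\Gamma_0^{3/2}$, then $\Gamma_s\in[\Gamma_0/2,\,3\Gamma_0/2]$ for all $s\in[s_1,s_2]$.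
   Context: The ER3BP with mass parameter $\mu$ and eccentricity $\varepsilon$ is given by the Hamiltonian (independent variable the true anomaly $f$ of $P_2$, rotating-pulsating frame with $P_1=(-\mu,0,0)$, $P_2=(1-\mu,0,0)$) $$\mathcal{H}=\tfrac12(p_1^2+p_2^2+p_3^2)+p_1y-xp_2-\frac{1}{1+\varepsilon\cos f}\Big(\frac{1-\mu}{d_1}+\frac{\mu}{d_2}-\tfrac12(x^2+y^2+z^2)\varepsilon\cos f\Big),$$ $d_1=\sqrt{(x+\mu)^2+y^2+z^2}$, $d_2=\sqrt{(x-1+\mu)^2+y^2+z^2}$. Kustaanheimo–Stiefel map: $\pi(u)=(\pi_1,\pi_2,\pi_3)(u)=(u_1^2-u_2^2-u_3^2+u_4^2,\;2u_1u_2-2u_3u_4,\;2u_1u_3+2u_2u_4)$, $u\in\mathbb{R}^4$; $A(u)$ is the $4\times4$ matrix with rows $(u_1,-u_2,-u_3,u_4)$, $(u_2,u_1,-u_4,-u_3)$, $(u_3,u_4,u_1,u_2)$, $(u_4,-u_3,u_2,-u_1)$; $\Lambda$ is the $4\times4$ matrix with only nonzero entries $\Lambda_{12}=-1$, $\Lambda_{21}=1$; $b(u)=2A(u)^T\Lambda A(u)u$; $l(u,U)=u_4U_1-u_3U_2+u_2U_3-u_1U_4$. The regularized Hamiltonian is $$\mathcal{K}(u,\phi,U,\Phi)=\tfrac18\|U-b(u)\|^2-\frac{1}{1+\varepsilon\cos\phi}\Big[(1-\mu)\|u\|^2\Big(\frac{1}{\|\pi(u)+(1,0,0)\|}+\pi_1(u)\Big)+\mu+\tfrac12\|u\|^2\big(\pi_1^2+\pi_2^2-\pi_3^2\varepsilon\cos\phi\big)+\frac{(1-\mu)^2}{2}\|u\|^2\Big]+\Phi\|u\|^2,$$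 with Hamilton equations in the independent variable $s$. Define $\Gamma(\phi,\Phi)=-\Phi+\dfrac{3-4\mu+\mu^2}{2(1+\varepsilon\cos\phi)}$. *)

From Stdlib Require Import Reals.
From Coquelicot Require Import Coquelicot.
Open Scope R_scope.

Definition upd (v : nat -> R) (i : nat) (t : R) : nat -> R :=
  fun j => if Nat.eqb j i then t else v j.

Definition sum4 (g : nat -> R) : R := g 0%nat + g 1%nat + g 2%nat + g 3%nat.

(* ER3BP. State w : coordinates 0,1,2 = (x,y,z), 3,4,5 = (p1,p2,p3);
   independent variable f (true anomaly).                                  *)
Definition d1 (mu : R) (w : nat -> R) : R :=
  sqrt ((w 0%nat + mu)^2 + (w 1%nat)^2 + (w 2%nat)^2).
Definition d2 (mu : R) (w : nat -> R) : R :=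
  sqrt ((w 0%nat - 1 + mu)^2 + (w 1%nat)^2 + (w 2%nat)^2).

Definition Hfun (mu eps f : R) (w : nat -> R) : R :=
  / 2 * ((w 3%nat)^2 + (w 4%nat)^2 + (w 5%nat)^2)
  + w 3%nat * w 1%nat - w 0%nat * w 4%nat
  - / (1 + eps * cos f) *
      ((1 - mu) / d1 mu w + mu / d2 mu w
       - / 2 * ((w 0%nat)^2 + (w 1%nat)^2 + (w 2%nat)^2) * eps * cos f).

Definition ER3BP_solution (mu eps : R) (w : R -> nat -> R) (f1 f2 : R) : Prop :=
  forall f, f1 <= f <= f2 -> forall i : nat, (i < 3)%nat ->
    is_derive (fun t => w t i) f
      (Derive (fun x => Hfun mu eps f (upd (w f) (i + 3) x)) (w f (i + 3)%nat))
    /\ is_derive (fun t => w t (i + 3)%nat) f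
      (- Derive (fun x => Hfun mu eps f (upd (w f) i x)) (w f i)).

Definition q1 (mu : R) (w : nat -> R) : R := w 0%nat - 1 + mu.
Definition qnorm (mu : R) (w : nat -> R) : R :=
  sqrt ((q1 mu w)^2 + (w 1%nat)^2 + (w 2%nat)^2).

(* Kustaanheimo–Stiefel objects, u = (u 0, u 1, u 2, u 3) = (u1,u2,u3,u4). *)
Definition pi1 (u : nat -> R) : R :=
  (u 0%nat)^2 - (u 1%nat)^2 - (u 2%nat)^2 + (u 3%nat)^2.
Definition pi2 (u : nat -> R) : R := 2 * u 0%nat * u 1%nat - 2 * u 2%nat * u 3%nat.
Definition pi3 (u : nat -> R) : R := 2 * u 0%nat * u 2%nat + 2 * u 1%nat * u 3%nat.

(* A(u), 0-indexed rows/columns. *)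
Definition Amat (u : nat -> R) (i j : nat) : R :=
  match i, j with
  | 0%nat, 0%nat => u 0%nat | 0%nat, 1%nat => - u 1%nat | 0%nat, 2%nat => - u 2%nat | 0%nat, 3%nat => u 3%nat
  | 1%nat, 0%nat => u 1%nat | 1%nat, 1%nat => u 0%nat | 1%nat, 2%nat => - u 3%nat | 1%nat, 3%nat => - u 2%nat
  | 2%nat, 0%nat => u 2%nat | 2%nat, 1%nat => u 3%nat | 2%nat, 2%nat => u 0%nat | 2%nat, 3%nat => u 1%nat
  | 3%nat, 0%nat => u 3%nat | 3%nat, 1%nat => - u 2%nat | 3%nat, 2%nat => u 1%nat | 3%nat, 3%nat => - u 0%nat
  | _, _ => 0
  end.

Definition Lam (i j : nat) : R :=
  match i, j with
  | 0%nat, 1%nat => -1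
  | 1%nat, 0%nat => 1
  | _, _ => 0
  end.

Definition bvec (u : nat -> R) (k : nat) : R :=
  2 * sum4 (fun i => Amat u i k *
        sum4 (fun j => Lam i j * sum4 (fun l => Amat u j l * u l))).

Definition lfun (u U : nat -> R) : R :=
  u 3%nat * U 0%nat - u 2%nat * U 1%nat + u 1%nat * U 2%nat - u 0%nat * U 3%nat.

(* Regularized state st : coordinates 0..3 = u, 4 = phi, 5..8 = U, 9 = Phi. *)
Definition uof (st : nat -> R) : nat -> R := fun i => st i.
Definition Uof (st : nat -> R) : nat -> R := fun i => st (i + 5)%nat.
Definition phiof (st : nat -> R) : R := st 4%nat.
Definition Phiof (st : nat -> R) : R := st 9%nat.

Definition unorm2 (u : nat -> R) : R := sum4 (fun i => (u i)^2).

Definition Kfun (mu eps : R) (st : nat -> R) : R :=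
  let u := uof st in let U := Uof st in let phi := phiof st in
  / 8 * sum4 (fun i => (U i - bvec u i)^2)
  - / (1 + eps * cos phi) *
      ((1 - mu) * unorm2 u *
         (/ sqrt ((pi1 u + 1)^2 + (pi2 u)^2 + (pi3 u)^2) + pi1 u)
       + mu
       + / 2 * unorm2 u * ((pi1 u)^2 + (pi2 u)^2 - (pi3 u)^2 * eps * cos phi)
       + (1 - mu)^2 / 2 * unorm2 u)
  + Phiof st * unorm2 u.

Definition K_solution (mu eps : R) (st : R -> nat -> R) (s1 s2 : R) : Prop :=
  forall s, s1 <= s <= s2 -> forall i : nat, (i < 5)%nat ->
    is_derive (fun t => st t i) s
      (Derive (fun x => Kfun mu eps (upd (st s) (i + 5) x)) (st s (i + 5)%nat))
    /\ is_derive (fun t => st t (i + 5)%nat) s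
      (- Derive (fun x => Kfun mu eps (upd (st s) i x)) (st s i)).

Definition Gamma (mu eps phi Phi : R) : R :=
  - Phi + (3 - 4 * mu + mu^2) / (2 * (1 + eps * cos phi)).

(* Along the regularized flow phi' = |u|^2 >= 0, so phi stays in [f1, f2]; with the
   Kustaanheimo-Stiefel identity |pi(u)| = |u|^2, the Hill-sphere confinement of q becomes
   |u|^2 <= rho = mu^(1/3) during the whole transit.

   Gamma drifts slowly: its derivative is dK/dphi plus the derivative of its explicit term,
   and the constant in Gamma cancels the leading part of the potential, so
   |Gamma'| <= 9 mu / (1 - eps)^2.

   The transit is short: (|u|^2)' = u.U / 2 and, on the level K = 0, (|u|^2)'' is a sum of
   squares plus (3/2) Gamma |u|^2 + mu / (2 (1 + eps cos phi)) up to O(|u|^3) terms, hence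
   at least mu / 4 while Gamma >= Gamma0 / 4.  A function with values in [0, rho] and second
   derivative >= mu / 4 lives on an interval of length at most sqrt (32 rho / mu).

   The product of the two bounds is at most Gamma0 / 2 as soon as
   20 rho < sqrt Gamma0 (1 - eps)^2, and a continuity argument removes the a priori
   assumption Gamma >= Gamma0 / 4. *)

From Stdlib Require Import Reals Lra Psatz Lia.
From Coquelicot Require Import Coquelicot.
Open Scope R_scope.

(** * Kustaanheimo-Stiefel geometry *)

Definition dist1sq (u : nat -> R) : R := (pi1 u + 1)^2 + (pi2 u)^2 + (pi3 u)^2.

Lemma pi_sq_sum u : (pi1 u)^2 + (pi2 u)^2 + (pi3 u)^2 = (unorm2 u)^2.
Proof. unfold pi1, pi2, pi3, unorm2, sum4. ring. Qed.

Lemma unorm2_ge0 u : 0 <= unorm2 u.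
Proof. unfold unorm2, sum4. nra. Qed.

Lemma pi1_bound u : - unorm2 u <= pi1 u <= unorm2 u.
Proof. pose proof (pi_sq_sum u). pose proof (unorm2_ge0 u). split; nra. Qed.

Lemma dist1sq_expand u : dist1sq u = 1 + 2 * pi1 u + (unorm2 u)^2.
Proof. unfold dist1sq. rewrite <- pi_sq_sum. ring. Qed.

Lemma dist1sq_pos u : unorm2 u < 1 -> 0 < dist1sq u.
Proof. intros Hr. rewrite dist1sq_expand. pose proof (pi1_bound u). nra. Qed.

Lemma pi_quadratic_bound u a b : -1 <= a * b <= 1 ->
  Rabs ((pi1 u)^2 + (pi2 u)^2 - (pi3 u)^2 * a * b) <= (unorm2 u)^2.
Proof. intros Hab. pose proof (pi_sq_sum u). apply Rabs_le; split; nra. Qed.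

Lemma bvec_orth u : sum4 (fun i => u i * bvec u i) = 0.
Proof. unfold bvec, sum4, Amat, Lam. simpl. ring. Qed.

Lemma bvec_norm_sq u : sum4 (fun i => (bvec u i)^2) = 4 * unorm2 u * ((pi1 u)^2 + (pi2 u)^2).
Proof. unfold bvec, unorm2, sum4, Amat, Lam, pi1, pi2. simpl. ring. Qed.

Lemma pulsation_ge eps f : 0 <= eps < 1 -> 0 < 1 - eps <= 1 + eps * cos f.
Proof. intros He. pose proof (COS_bound f). split; nra. Qed.

(** * Partial derivatives of the regularized Hamiltonian *)

(* The bracket of [Kfun]: K = |U - b(u)|^2 / 8 - Kpot / (1 + eps cos phi) + Phi |u|^2. *)
Definition Kpot (mu eps : R) (v : nat -> R) : R :=
  let u := uof v in
  (1 - mu) * unorm2 u * (/ sqrt (dist1sq u) + pi1 u) + mu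
  + / 2 * unorm2 u * ((pi1 u)^2 + (pi2 u)^2 - (pi3 u)^2 * eps * cos (phiof v))
  + (1 - mu)^2 / 2 * unorm2 u.

Definition unit_vec (k : nat) : nat -> R := fun i => if Nat.eqb i k then 1 else 0.

Definition Dpi1 (u d : nat -> R) : R :=
  2 * (u 0%nat * d 0%nat - u 1%nat * d 1%nat - u 2%nat * d 2%nat + u 3%nat * d 3%nat).
Definition Dpi2 (u d : nat -> R) : R :=
  2 * (d 0%nat * u 1%nat + u 0%nat * d 1%nat - d 2%nat * u 3%nat - u 2%nat * d 3%nat).
Definition Dpi3 (u d : nat -> R) : R :=
  2 * (d 0%nat * u 2%nat + u 0%nat * d 2%nat + d 1%nat * u 3%nat + u 1%nat * d 3%nat).
Definition Dunorm2 (u d : nat -> R) : R := 2 * sum4 (fun i => u i * d i).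
Definition Ddist1sq (u d : nat -> R) : R :=
  2 * (pi1 u + 1) * Dpi1 u d + 2 * pi2 u * Dpi2 u d + 2 * pi3 u * Dpi3 u d.
Definition Dbvec (u d : nat -> R) (k : nat) : R :=
  2 * sum4 (fun i => Amat d i k * sum4 (fun j => Lam i j * sum4 (fun l => Amat u j l * u l)))
  + 2 * sum4 (fun i => Amat u i k *
          sum4 (fun j => Lam i j * sum4 (fun l => Amat d j l * u l + Amat u j l * d l))).

Definition DK_u (mu eps : R) (v d : nat -> R) : R :=
  let u := uof v in let c := eps * cos (phiof v) in let q := sqrt (dist1sq u) in
  / 4 * sum4 (fun i => (Uof v i - bvec u i) * (- Dbvec u d i))
  - / (1 + c) *
      ((1 - mu) * (Dunorm2 u d * (/ q + pi1 u)
                   + unorm2 u * (- Ddist1sq u d / (2 * q ^ 3) + Dpi1 u d))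
       + / 2 * (Dunorm2 u d * ((pi1 u)^2 + (pi2 u)^2 - (pi3 u)^2 * c)
               + unorm2 u * (2 * pi1 u * Dpi1 u d + 2 * pi2 u * Dpi2 u d
                             - 2 * pi3 u * Dpi3 u d * c))
       + (1 - mu)^2 / 2 * Dunorm2 u d)
  + Phiof v * Dunorm2 u d.

Definition DK_phi (mu eps : R) (v : nat -> R) : R :=
  let u := uof v in let phi := phiof v in
  - (eps * sin phi / (1 + eps * cos phi)^2) * Kpot mu eps v
  - / (1 + eps * cos phi) * (/ 2 * unorm2 u * ((pi3 u)^2 * eps * sin phi)).

Ltac unfold_K :=
  unfold DK_u, DK_phi, Kpot, Kfun, Ddist1sq, dist1sq, Dbvec, Dunorm2, Dpi1, Dpi2, Dpi3,
    unit_vec, bvec, unorm2, sum4, Amat, Lam, pi1, pi2, pi3, uof, Uof, phiof, Phiof, upd in *;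
  simpl.

(* [auto_derive] rewrites the argument of [sqrt] into several syntactically different
   polynomials; fold them back into one so that [field] treats the root as a single atom. *)
Ltac unify_sqrt Hq :=
  repeat match goal with |- context [sqrt ?e] =>
    lazymatch type of Hq with sqrt ?S <> 0 =>
      assert_fails (constr_eq e S); replace e with S by ring end end.

(* [auto_derive] leaves equalities typed in the carrier of [R_AbsRing], which [field]
   does not recognise. *)
Ltac field_R := lazymatch goal with |- ?a = ?b => change (@eq R a b) end; field.

Lemma Kfun_derive_u mu eps v k : (k < 4)%nat ->
  0 < dist1sq (uof v) -> 1 + eps * cos (phiof v) <> 0 ->
  is_derive (fun x => Kfun mu eps (upd v k x)) (v k) (DK_u mu eps v (unit_vec k)).
Proof.
  intros Hk HS HD.
  assert (Hq : sqrt (dist1sq (uof v)) <> 0) by (apply Rgt_not_eq, sqrt_lt_R0; exact HS).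
  destruct k as [|[|[|[|k]]]]; [| | | |lia]; unfold_K; auto_derive; unify_sqrt Hq;
    try (repeat split; [eapply Rlt_le_trans; [exact HS | right; ring] | exact Hq]);
    field_R; auto.
Qed.

Lemma Kfun_derive_U mu eps v k : (k < 4)%nat ->
  is_derive (fun x => Kfun mu eps (upd v (k + 5) x)) (v (k + 5)%nat)
    ((Uof v k - bvec (uof v) k) / 4).
Proof.
  intros Hk.
  destruct k as [|[|[|[|k]]]]; [| | | |lia]; unfold_K; auto_derive; auto; field_R.
Qed.

Lemma Kfun_derive_phi mu eps v :
  0 < dist1sq (uof v) -> 1 + eps * cos (phiof v) <> 0 ->
  is_derive (fun x => Kfun mu eps (upd v 4 x)) (v 4%nat) (DK_phi mu eps v).
Proof.
  intros HS HD.
  assert (Hq : sqrt (dist1sq (uof v)) <> 0) by (apply Rgt_not_eq, sqrt_lt_R0; exact HS).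
  unfold_K; auto_derive.
  - repeat split; auto.
  - unify_sqrt Hq. field_R; auto.
Qed.

Lemma Kfun_derive_Phi mu eps v :
  is_derive (fun x => Kfun mu eps (upd v 9 x)) (v 9%nat) (unorm2 (uof v)).
Proof. unfold_K; auto_derive; auto; field_R. Qed.

(** * The rates of |u|^2 and of Gamma *)

Definition usq_rate (v : nat -> R) : R := sum4 (fun i => uof v i * Uof v i) / 2.

Definition usq_accel (mu eps : R) (v : nat -> R) : R :=
  sum4 (fun i => (Uof v i - bvec (uof v) i) / 4 * Uof v i
                 - uof v i * DK_u mu eps v (unit_vec i)) / 2.

Definition accel_rem (mu eps : R) (v : nat -> R) : R :=
  let u := uof v in let p1 := pi1 u in let r := unorm2 u in let q := sqrt (dist1sq u) in
  (1 - mu) * (3 * (/ q + p1 - 1) + 2 * (p1 - (p1 + r^2) / q^3))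
  + 7/2 * (p1^2 + (pi2 u)^2 - (pi3 u)^2 * eps * cos (phiof v)).

Lemma usq_accel_eq mu eps v :
  0 < dist1sq (uof v) -> 1 + eps * cos (phiof v) <> 0 ->
  usq_accel mu eps v =
    sum4 (fun i => ((Uof v i - bvec (uof v) i) / 4 + bvec (uof v) i)^2)
    - sum4 (fun i => (bvec (uof v) i)^2)
    + 3/2 * Gamma mu eps (phiof v) (Phiof v) * unorm2 (uof v)
    + (mu + unorm2 (uof v) * accel_rem mu eps v) / (2 * (1 + eps * cos (phiof v)))
    + Kfun mu eps v / 2.
Proof.
  intros HS HD.
  assert (Hq : sqrt (dist1sq (uof v)) <> 0) by (apply Rgt_not_eq, sqrt_lt_R0; exact HS).
  unfold usq_accel, accel_rem, Gamma; unfold_K; field; auto.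
Qed.

(* The constant (3 - 4 mu + mu^2) / 2 = (1 - mu) + (1 - mu)^2 / 2 of [Gamma] is the leading
   part of [Kpot / |u|^2]; what is left is [mu + |u|^2 pot_rem] with [pot_rem = O(|u|^2)]. *)
Definition pot_rem (mu eps : R) (v : nat -> R) : R :=
  let u := uof v in
  (1 - mu) * (/ sqrt (dist1sq u) + pi1 u - 1)
  + / 2 * ((pi1 u)^2 + (pi2 u)^2 - (pi3 u)^2 * eps * cos (phiof v)).

Lemma Kpot_expand mu eps v :
  Kpot mu eps v = mu + unorm2 (uof v) * ((3 - 4 * mu + mu^2) / 2 + pot_rem mu eps v).
Proof. unfold Kpot, pot_rem; cbv zeta. set (iq := / sqrt _). field. Qed.

Definition Gamma_rate (mu eps : R) (v : nat -> R) : R :=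
  DK_phi mu eps v
  + (3 - 4 * mu + mu^2) * eps * sin (phiof v) * unorm2 (uof v)
    / (2 * (1 + eps * cos (phiof v))^2).

Lemma Gamma_rate_eq mu eps v : 1 + eps * cos (phiof v) <> 0 ->
  Gamma_rate mu eps v =
    eps * sin (phiof v) *
      (- (mu + unorm2 (uof v) * pot_rem mu eps v) / (1 + eps * cos (phiof v))^2
       - unorm2 (uof v) * (pi3 (uof v))^2 / (2 * (1 + eps * cos (phiof v)))).
Proof.
  intros HD. unfold Gamma_rate, DK_phi; cbv zeta. rewrite Kpot_expand.
  set (Y := pot_rem mu eps v). field. exact HD.
Qed.

(** * Estimates near the secondary *)

Lemma dist_near_one p r q : 0 <= r <= 1/10 -> -r <= p <= r -> 0 < q -> q^2 = 1 + 2*p + r^2 ->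
  89/100 <= q <= 11/10 /\ -(6/5) * r <= q - 1 <= 6/5 * r.
Proof.
  intros Hr Hp Hq Hq2.
  assert (89/100 <= q <= 11/10) by (split; nra).
  assert ((q - 1) * (q + 1) = 2*p + r^2) by nra.
  split; [|split]; nra.
Qed.

Lemma inv_dist_expansion p r q : 0 <= r <= 1/10 -> -r <= p <= r -> 0 < q ->
  q^2 = 1 + 2*p + r^2 -> Rabs (/ q + p - 1) <= 7 * r^2.
Proof.
  intros Hr Hp Hq Hq2.
  destruct (dist_near_one p r q Hr Hp Hq Hq2) as [Hq1 Hq3].
  set (E := q * (1 - p) - 1).
  assert (HE : E * (E + 2) = -3*p^2 + 2*p^3 + r^2*(1-p)^2) by (unfold E; nra).
  assert (HEb : - (5 * r^2) <= E <= 5 * r^2).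
  { assert (Hp2 : p^2 <= r^2) by nra.
    assert (Hp3 : - (r^3) <= p^3 <= r^3) by (split; nra).
    assert (HX : - (5 * r^2) <= -3*p^2 + 2*p^3 + r^2*(1-p)^2 <= 5 * r^2) by (split; nra).
    assert (1 <= E + 2) by (unfold E; nra).
    rewrite <- HE in HX. destruct (Rle_or_lt 0 E); split; nra. }
  replace (/ q + p - 1) with (- E / q) by (unfold E; field; lra).
  apply Rabs_le; split; apply (Rmult_le_reg_r q); try lra;
    unfold Rdiv; rewrite Rmult_assoc, Rinv_l by lra; nra.
Qed.

Lemma inv_dist_cube_expansion p r q : 0 <= r <= 1/10 -> -r <= p <= r -> 0 < q ->
  q^2 = 1 + 2*p + r^2 -> Rabs (p - (p + r^2) / q^3) <= 8 * r^2.
Proof.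
  intros Hr Hp Hq Hq2.
  destruct (dist_near_one p r q Hr Hp Hq Hq2) as [Hq1 Hq3].
  assert (Hcube : 7/10 <= q^3) by nra.
  assert (Hd : - (4 * r) <= q^3 - 1 <= 4 * r).
  { replace (q^3 - 1) with ((q - 1) * (q^2 + q + 1)) by ring. split; nra. }
  replace (p - (p + r^2) / q^3) with ((p * (q^3 - 1) - r^2) / q^3) by (field; nra).
  apply Rabs_le; split; apply (Rmult_le_reg_r (q^3)); try nra;
    unfold Rdiv; rewrite Rmult_assoc, Rinv_l by nra; nra.
Qed.

Lemma KS_inv_dist_expansions u : unorm2 u <= 1/10 ->
  Rabs (/ sqrt (dist1sq u) + pi1 u - 1) <= 7 * (unorm2 u)^2 /\
  Rabs (pi1 u - (pi1 u + (unorm2 u)^2) / (sqrt (dist1sq u))^3) <= 8 * (unorm2 u)^2.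
Proof.
  intros Hr.
  pose proof (unorm2_ge0 u). pose proof (pi1_bound u).
  assert (HS : 0 < dist1sq u) by (apply dist1sq_pos; lra).
  assert (Hq : 0 < sqrt (dist1sq u)) by (apply sqrt_lt_R0; exact HS).
  assert (Hq2 : (sqrt (dist1sq u))^2 = 1 + 2 * pi1 u + (unorm2 u)^2)
    by (rewrite <- dist1sq_expand; apply pow2_sqrt; lra).
  split; [apply inv_dist_expansion | apply inv_dist_cube_expansion]; auto; lra.
Qed.

Lemma pot_rem_bound mu eps v : 0 < mu < 1 -> 0 < eps < 1 -> unorm2 (uof v) <= 1/10 ->
  Rabs (pot_rem mu eps v) <= 15/2 * (unorm2 (uof v))^2.
Proof.
  intros Hmu He Hr.
  destruct (KS_inv_dist_expansions _ Hr) as [H1 _].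
  assert (Hc : -1 <= eps * cos (phiof v) <= 1) by (pose proof (COS_bound (phiof v)); split; nra).
  pose proof (pi_quadratic_bound (uof v) _ _ Hc) as H2.
  unfold pot_rem; cbv zeta.
  eapply Rle_trans; [apply Rabs_triang|].
  rewrite !Rabs_mult, (Rabs_pos_eq (1 - mu)), (Rabs_pos_eq (/ 2)) by lra.
  pose proof (Rabs_pos (/ sqrt (dist1sq (uof v)) + pi1 (uof v) - 1)).
  nra.
Qed.

Lemma Gamma_rate_bound mu eps v : 0 < mu < 1 -> 0 < eps < 1 ->
  unorm2 (uof v) <= 1/10 -> (unorm2 (uof v))^3 <= mu ->
  Rabs (Gamma_rate mu eps v) <= 9 * mu / (1 - eps)^2.
Proof.
  intros Hmu He Hr Hr3.
  destruct (pulsation_ge eps (phiof v) ltac:(lra)) as [He1 HD].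
  rewrite Gamma_rate_eq by lra.
  pose proof (pot_rem_bound mu eps v Hmu He Hr) as HY.
  pose proof (unorm2_ge0 (uof v)) as Hr0.
  pose proof (pi_sq_sum (uof v)) as Hpi.
  pose proof (SIN_bound (phiof v)) as Hs.
  set (r := unorm2 (uof v)) in *. set (Y := pot_rem mu eps v) in *.
  set (D := 1 + eps * cos (phiof v)) in *.
  set (m := / (1 - eps)).
  assert (Hm1 : 1 <= m) by (unfold m; rewrite <- Rinv_1; apply Rinv_le_contravar; lra).
  assert (Hk : 0 < / D <= m) by (split; [apply Rinv_0_lt_compat | apply Rinv_le_contravar]; lra).
  assert (HrY : Rabs (mu + r * Y) <= 17/2 * mu).
  { eapply Rle_trans; [apply Rabs_triang|].
    rewrite Rabs_mult, (Rabs_pos_eq mu), (Rabs_pos_eq r) by lra. nra. }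
  assert (Hp3 : 0 <= r * (pi3 (uof v))^2 <= mu) by (split; nra).
  replace (9 * mu / (1 - eps)^2) with (1 * (9 * mu * m^2)) by (unfold m; field; lra).
  replace (- (mu + r * Y) / D^2 - r * (pi3 (uof v))^2 / (2 * D))
    with (- ((mu + r * Y) * (/ D)^2 + r * (pi3 (uof v))^2 * / D / 2)) by (field; lra).
  rewrite Rabs_mult. apply Rmult_le_compat.
  - apply Rabs_pos.
  - apply Rabs_pos.
  - rewrite Rabs_mult. apply Rabs_le in Hs. pose proof (Rabs_pos (sin (phiof v))).
    rewrite (Rabs_pos_eq eps) by lra. nra.
  - rewrite Rabs_Ropp. eapply Rle_trans; [apply Rabs_triang|].
    rewrite Rabs_mult, (Rabs_pos_eq ((/ D)^2)) by nra.
    rewrite (Rabs_pos_eq (_ * / D / 2)) by (apply Rmult_le_pos; [apply Rmult_le_pos|]; lra).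
    assert (HD2 : (/ D)^2 <= m^2) by (apply pow_incr; lra).
    assert (HD1 : / D <= m^2) by nra.
    pose proof (Rabs_pos (mu + r * Y)).
    assert (Rabs (mu + r * Y) * (/ D)^2 <= 17/2 * mu * m^2)
      by (apply Rmult_le_compat; nra).
    assert (r * (pi3 (uof v))^2 * / D <= mu * m^2) by (apply Rmult_le_compat; lra).
    lra.
Qed.

Lemma accel_rem_bound mu eps v : 0 < mu < 1 -> 0 < eps < 1 -> unorm2 (uof v) <= 1/10 ->
  Rabs (accel_rem mu eps v) <= 81/2 * (unorm2 (uof v))^2.
Proof.
  intros Hmu He Hr.
  destruct (KS_inv_dist_expansions _ Hr) as [H1 H2].
  assert (Hc : -1 <= eps * cos (phiof v) <= 1) by (pose proof (COS_bound (phiof v)); split; nra).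
  pose proof (pi_quadratic_bound (uof v) _ _ Hc) as H3.
  unfold accel_rem; cbv zeta.
  set (A := / sqrt (dist1sq (uof v)) + pi1 (uof v) - 1) in *.
  set (B := pi1 (uof v) - (pi1 (uof v) + unorm2 (uof v) ^ 2) / sqrt (dist1sq (uof v)) ^ 3) in *.
  set (C := pi1 (uof v) ^ 2 + pi2 (uof v) ^ 2 - pi3 (uof v) ^ 2 * eps * cos (phiof v)) in *.
  assert (HAB : Rabs (3 * A + 2 * B) <= 37 * (unorm2 (uof v))^2).
  { eapply Rle_trans; [apply Rabs_triang|].
    rewrite !Rabs_mult, (Rabs_pos_eq 3), (Rabs_pos_eq 2) by lra. lra. }
  eapply Rle_trans; [apply Rabs_triang|].
  rewrite !Rabs_mult, (Rabs_pos_eq (1 - mu)), (Rabs_pos_eq (7/2)) by lra.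
  pose proof (Rabs_pos (3 * A + 2 * B)). nra.
Qed.

Lemma usq_accel_lower mu eps v : 0 < mu < 1 -> 0 < eps < 1 -> unorm2 (uof v) <= 1/10 ->
  Kfun mu eps v = 0 ->
  100 * (unorm2 (uof v))^2 <= Gamma mu eps (phiof v) (Phiof v) * (1 - eps) ->
  mu / 4 <= usq_accel mu eps v.
Proof.
  intros Hmu He Hr HK HG.
  destruct (pulsation_ge eps (phiof v) ltac:(lra)) as [He1 HD].
  assert (HD2 : 1 + eps * cos (phiof v) <= 2) by (pose proof (COS_bound (phiof v)); nra).
  rewrite usq_accel_eq by (try apply dist1sq_pos; lra).
  rewrite HK, bvec_norm_sq.
  pose proof (accel_rem_bound mu eps v Hmu He Hr) as HX.
  pose proof (unorm2_ge0 (uof v)) as Hr0.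
  pose proof (pi_sq_sum (uof v)) as Hpi.
  assert (Hsq : 0 <= sum4 (fun i => ((Uof v i - bvec (uof v) i) / 4 + bvec (uof v) i)^2))
    by (unfold sum4; pose proof (pow2_ge_0 ((Uof v 0 - bvec (uof v) 0) / 4 + bvec (uof v) 0));
        pose proof (pow2_ge_0 ((Uof v 1 - bvec (uof v) 1) / 4 + bvec (uof v) 1));
        pose proof (pow2_ge_0 ((Uof v 2 - bvec (uof v) 2) / 4 + bvec (uof v) 2));
        pose proof (pow2_ge_0 ((Uof v 3 - bvec (uof v) 3) / 4 + bvec (uof v) 3)); lra).
  set (r := unorm2 (uof v)) in *. set (X := accel_rem mu eps v) in *.
  set (G := Gamma mu eps (phiof v) (Phiof v)) in *.
  set (D := 1 + eps * cos (phiof v)) in *.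
  set (m := / (1 - eps)).
  assert (Hm1 : 1 <= m) by (unfold m; rewrite <- Rinv_1; apply Rinv_le_contravar; lra).
  assert (Hk : / 2 <= / D <= m) by (split; apply Rinv_le_contravar; lra).
  assert (HGr : 100 * r^3 * m <= G * r).
  { unfold m. apply (Rmult_le_reg_r (1 - eps)); [lra|].
    replace (100 * r^3 * / (1 - eps) * (1 - eps)) with (100 * r^2 * r) by (field; lra). nra. }
  assert (HrX : Rabs (r * X * / D) <= 81/2 * r^3 * m).
  { rewrite !Rabs_mult, (Rabs_pos_eq r), (Rabs_pos_eq (/ D)) by lra.
    pose proof (Rabs_pos X). apply Rmult_le_compat; nra. }
  apply Rabs_le_between in HrX.
  assert (Hp12 : (pi1 (uof v))^2 + (pi2 (uof v))^2 <= r^2) by nra.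
  assert (Hr3 : 0 <= r^3) by (apply pow_le; lra).
  assert (Hb : 4 * r * ((pi1 (uof v))^2 + (pi2 (uof v))^2) <= 4 * r^3 * m)
    by (apply Rle_trans with (4 * r^3); nra).
  replace ((mu + r * X) / (2 * D)) with (mu * / D / 2 + r * X * / D / 2) by (field; lra).
  assert (mu / 4 <= mu * / D / 2) by nra.
  lra.
Qed.

(** * Real analysis *)

Lemma increment_lower_bound (g g' : R -> R) a b lo : a <= b ->
  (forall t, a <= t <= b -> is_derive g t (g' t)) ->
  (forall t, a <= t <= b -> lo <= g' t) ->
  lo * (b - a) <= g b - g a.
Proof.
  intros Hab Hd Hlo. destruct (Req_dec a b) as [<- | Hne]; [nra|].
  destruct (MVT_cor2 g g' a b) as [c [-> Hc]];
    [lra | intros c Hc; apply is_derive_Reals, Hd; lra |].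
  specialize (Hlo c ltac:(lra)). nra.
Qed.

Lemma increment_abs_bound (g g' : R -> R) a b M : a <= b ->
  (forall t, a <= t <= b -> is_derive g t (g' t)) ->
  (forall t, a <= t <= b -> Rabs (g' t) <= M) ->
  Rabs (g b - g a) <= M * (b - a).
Proof.
  intros Hab Hd HM.
  assert (Hg := increment_lower_bound g g' a b (- M) Hab Hd
    (fun t Ht => proj1 (proj1 (Rabs_le_between _ _) (HM t Ht)))).
  assert (Hopp := increment_lower_bound (fun t => - g t) (fun t => - g' t) a b (- M) Hab
    (fun t Ht => is_derive_opp _ _ _ (Hd t Ht))
    (fun t Ht => Ropp_le_contravar _ _ (proj2 (proj1 (Rabs_le_between _ _) (HM t Ht))))).
  apply Rabs_le_between. lra.
Qed.

Lemma convex_midpoint (h h' h'' : R -> R) x y : x <= y ->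
  (forall t, x <= t <= y -> is_derive h t (h' t)) ->
  (forall t, x <= t <= y -> is_derive h' t (h'' t)) ->
  (forall t, x <= t <= y -> 0 <= h'' t) ->
  2 * h ((x + y) / 2) <= h x + h y.
Proof.
  intros Hxy Hd Hd' Hconv.
  destruct (Req_dec x y) as [<- | Hne]; [replace ((x + x) / 2) with x by field; lra|].
  destruct (MVT_cor2 h h' x ((x + y) / 2)) as [c1 [E1 Hc1]];
    [lra | intros c Hc; apply is_derive_Reals, Hd; lra |].
  destruct (MVT_cor2 h h' ((x + y) / 2) y) as [c2 [E2 Hc2]];
    [lra | intros c Hc; apply is_derive_Reals, Hd; lra |].
  assert (Hmono := increment_lower_bound h' h'' c1 c2 0 ltac:(lra)
    (fun t Ht => Hd' t ltac:(lra)) (fun t Ht => Hconv t ltac:(lra))).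
  assert (Hhalf : y - (x + y) / 2 = (x + y) / 2 - x) by field.
  rewrite Hhalf in E2. nra.
Qed.

Lemma sq_length_le_of_accel (r r' r'' : R -> R) x y a rho : x <= y ->
  (forall t, x <= t <= y -> is_derive r t (r' t)) ->
  (forall t, x <= t <= y -> is_derive r' t (r'' t)) ->
  (forall t, x <= t <= y -> a <= r'' t) ->
  (forall t, x <= t <= y -> 0 <= r t <= rho) ->
  a * (y - x)^2 <= 8 * rho.
Proof.
  intros Hxy Hr Hr' Ha Hb.
  assert (Hmid := convex_midpoint (fun t => r t + a * (t - x) * (y - t) / 2)
    (fun t => r' t + a * (x + y - 2 * t) / 2) (fun t => r'' t - a) x y Hxy).
  cbv beta in Hmid.
  destruct (Hb x ltac:(lra)), (Hb y ltac:(lra)), (Hb ((x + y) / 2) ltac:(lra)).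
  enough (2 * r ((x + y) / 2) + a * (y - x)^2 / 4 <= r x + r y) by lra.
  replace (2 * r ((x + y) / 2) + a * (y - x)^2 / 4)
    with (2 * (r ((x + y) / 2) + a * ((x + y) / 2 - x) * (y - (x + y) / 2) / 2)) by field.
  replace (r x + r y) with (r x + a * (x - x) * (y - x) / 2 + (r y + a * (y - x) * (y - y) / 2))
    by field.
  apply Hmid.
  - intros t Ht. apply (is_derive_plus r (fun t => a * (t - x) * (y - t) / 2)); [apply Hr; lra|].
    auto_derive; auto. field_R.
  - intros t Ht. apply (is_derive_plus r' (fun t => a * (x + y - 2 * t) / 2)); [apply Hr'; lra|].
    auto_derive; auto. field_R.
  - intros t Ht. specialize (Ha t Ht). lra.
Qed.

Lemma is_derive_continuity_pt (f : R -> R) x l : is_derive f x l -> continuity_pt f x.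
Proof. intros H. apply derivable_continuous_pt. exists l. now apply is_derive_Reals. Qed.

Lemma continuity_pt_ball (f : R -> R) x e : continuity_pt f x -> 0 < e ->
  exists d, 0 < d /\ forall y, Rabs (y - x) < d -> Rabs (f y - f x) < e.
Proof.
  intros Hf He. destruct (Hf e He) as [d [Hd Hy]].
  exists d. split; [exact Hd|]. intros y Hyd.
  (* [continuity_pt] only constrains the points [y <> x]. *)
  destruct (Req_dec y x) as [-> | Hne].
  - rewrite Rminus_diag, Rabs_R0. exact He.
  - apply (Hy y). split; [split; [exact I | auto] | exact Hyd].
Qed.

Lemma continuity_induction (g : R -> R) a b lo :
  (forall t, a <= t <= b -> continuity_pt g t) -> lo < g a ->
  (forall t, a <= t <= b -> (forall s, a <= s <= t -> lo <= g s) ->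
     forall s, a <= s <= t -> lo < g s) ->
  forall s, a <= s <= b -> lo <= g s.
Proof.
  intros Hc Ha Hstep s0 Hs0.
  set (E := fun t => a <= t <= b /\ forall s, a <= s <= t -> lo <= g s).
  assert (HEa : E a) by (split; [lra | intros s Hs; replace s with a by lra; lra]).
  destruct (completeness E) as [T [HT1 HT2]];
    [exists b; intros t [Ht _]; lra | exists a; exact HEa |].
  assert (HaT : a <= T) by (apply HT1, HEa).
  assert (HTb : T <= b) by (apply HT2; intros t [Ht _]; lra).
  assert (Hbelow : forall s, a <= s < T -> lo <= g s).
  { intros s Hs. destruct (Rle_or_lt lo (g s)) as [|Hlt]; [assumption | exfalso].
    enough (T <= s) by lra.
    apply HT2. intros t [Ht Hgt]. destruct (Rle_or_lt t s) as [|Hts]; [assumption|].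
    specialize (Hgt s ltac:(lra)). lra. }
  assert (HET : E T).
  { split; [lra|]. intros s Hs.
    destruct (Rle_or_lt T s) as [HsT | HsT]; [|apply Hbelow; lra].
    replace s with T by lra.
    destruct (Rle_or_lt lo (g T)) as [|Hlt]; [assumption | exfalso].
    destruct (Req_dec T a) as [-> | HTa]; [lra|].
    destruct (continuity_pt_ball g T (lo - g T) (Hc T ltac:(lra)) ltac:(lra))
      as [d [Hd Hy]].
    set (x := Rmax a (T - d / 2)).
    assert (a <= x < T) by (split; [apply Rmax_l | apply Rmax_lub_lt; lra]).
    assert (Hx := Hy x ltac:(apply Rabs_def1; unfold x in *; pose proof (Rmax_r a (T - d/2)); lra)).
    apply Rabs_def2 in Hx. specialize (Hbelow x ltac:(lra)). lra. }
  destruct (Req_dec T b) as [<- | HTb'].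
  - apply (proj2 HET). lra.
  - exfalso.
    assert (HgT := Hstep T ltac:(lra) (proj2 HET) T ltac:(lra)).
    destruct (continuity_pt_ball g T (g T - lo) (Hc T ltac:(lra)) ltac:(lra))
      as [d [Hd Hy]].
    set (t := Rmin b (T + d / 2)).
    assert (T < t <= T + d / 2) by (split; [apply Rmin_glb_lt | apply Rmin_r]; lra).
    enough (E t) by (assert (t <= T) by (apply HT1; assumption); lra).
    split; [pose proof (Rmin_l b (T + d / 2)); unfold t in *; lra|].
    intros s Hs. destruct (Rle_or_lt s T) as [|HsT]; [apply (proj2 HET); lra|].
    assert (Hs' := Hy s ltac:(apply Rabs_def1; lra)).
    apply Rabs_def2 in Hs'. lra.
Qed.

Lemma is_derive_sum4 (f : nat -> R -> R) (df : nat -> R) x :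
  (forall i, (i < 4)%nat -> is_derive (f i) x (df i)) ->
  is_derive (fun t => sum4 (fun i => f i t)) x (sum4 df).
Proof.
  intros H. unfold sum4.
  apply (is_derive_plus (fun t => f 0%nat t + f 1%nat t + f 2%nat t) (f 3%nat)); [|apply H; lia].
  apply (is_derive_plus (fun t => f 0%nat t + f 1%nat t) (f 2%nat)); [|apply H; lia].
  apply (is_derive_plus (f 0%nat) (f 1%nat)); apply H; lia.
Qed.

(** * Along a regularized solution *)

(* Stated for [Derive] on [R -> R], so that it rewrites the hypotheses of [K_solution]. *)
Lemma Derive_Kfun_partial mu eps v i l :
  is_derive (fun x => Kfun mu eps (upd v i x)) (v i) l ->
  Derive (fun x => Kfun mu eps (upd v i x)) (v i) = l.
Proof. apply is_derive_unique. Qed.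

Section Regularized_flow.

Variables (mu eps s1 s2 : R) (st : R -> nat -> R).
Hypothesis Hsol : K_solution mu eps st s1 s2.

Lemma flow_u s k : s1 <= s <= s2 -> (k < 4)%nat ->
  is_derive (fun t => st t k) s ((Uof (st s) k - bvec (uof (st s)) k) / 4).
Proof.
  intros Hs Hk. destruct (Hsol s Hs k ltac:(lia)) as [H _].
  now rewrite (Derive_Kfun_partial _ _ _ _ _ (Kfun_derive_U mu eps (st s) k Hk)) in H.
Qed.

Lemma flow_phi s : s1 <= s <= s2 -> is_derive (fun t => phiof (st t)) s (unorm2 (uof (st s))).
Proof.
  intros Hs. destruct (Hsol s Hs 4%nat ltac:(lia)) as [H _]. cbv [Nat.add] in H.
  now rewrite (Derive_Kfun_partial _ _ _ _ _ (Kfun_derive_Phi mu eps (st s))) in H.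
Qed.

Lemma flow_phi_range s : s1 <= s <= s2 -> phiof (st s1) <= phiof (st s) <= phiof (st s2).
Proof.
  intros Hs.
  pose proof (increment_lower_bound _ _ s1 s 0 ltac:(lra)
    (fun t Ht => flow_phi t ltac:(lra)) (fun t _ => unorm2_ge0 _)).
  pose proof (increment_lower_bound _ _ s s2 0 ltac:(lra)
    (fun t Ht => flow_phi t ltac:(lra)) (fun t _ => unorm2_ge0 _)).
  lra.
Qed.

Lemma usq_derive s : s1 <= s <= s2 ->
  is_derive (fun t => unorm2 (uof (st t))) s (usq_rate (st s)).
Proof.
  intros Hs.
  assert (H := is_derive_sum4 (fun i t => st t i * st t i)
    (fun i => (Uof (st s) i - bvec (uof (st s)) i) / 4 * st s i
              + st s i * ((Uof (st s) i - bvec (uof (st s)) i) / 4)) s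
    (fun i Hi => Derive.is_derive_mult _ _ _ _ _ (flow_u s i Hs Hi) (flow_u s i Hs Hi))).
  replace (usq_rate (st s)) with
    (sum4 (fun i => (Uof (st s) i - bvec (uof (st s)) i) / 4 * st s i
                    + st s i * ((Uof (st s) i - bvec (uof (st s)) i) / 4))).
  - eapply is_derive_ext; [|exact H]. intros t. unfold unorm2, sum4, uof. simpl. ring.
  - pose proof (bvec_orth (uof (st s))) as Horth.
    unfold usq_rate, sum4, uof in *. field_simplify. lra.
Qed.

Hypothesis Heps : 0 <= eps < 1.

Lemma regular_point v : unorm2 (uof v) < 1 ->
  0 < dist1sq (uof v) /\ 1 + eps * cos (phiof v) <> 0.
Proof.
  intros Hr. split; [now apply dist1sq_pos|].
  pose proof (pulsation_ge eps (phiof v) Heps). lra.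
Qed.

Lemma flow_U s k : s1 <= s <= s2 -> (k < 4)%nat -> unorm2 (uof (st s)) < 1 ->
  is_derive (fun t => st t (k + 5)%nat) s (- DK_u mu eps (st s) (unit_vec k)).
Proof.
  intros Hs Hk Hr. destruct (regular_point _ Hr) as [HS HD].
  destruct (Hsol s Hs k ltac:(lia)) as [_ H].
  now rewrite (Derive_Kfun_partial _ _ _ _ _ (Kfun_derive_u mu eps (st s) k Hk HS HD)) in H.
Qed.

Lemma flow_Phi s : s1 <= s <= s2 -> unorm2 (uof (st s)) < 1 ->
  is_derive (fun t => Phiof (st t)) s (- DK_phi mu eps (st s)).
Proof.
  intros Hs Hr. destruct (regular_point _ Hr) as [HS HD].
  destruct (Hsol s Hs 4%nat ltac:(lia)) as [_ H]. cbv [Nat.add] in H.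
  now rewrite (Derive_Kfun_partial _ _ _ _ _ (Kfun_derive_phi mu eps (st s) HS HD)) in H.
Qed.

Lemma usq_rate_derive s : s1 <= s <= s2 -> unorm2 (uof (st s)) < 1 ->
  is_derive (fun t => usq_rate (st t)) s (usq_accel mu eps (st s)).
Proof.
  intros Hs Hr.
  assert (H := is_derive_sum4 (fun i t => st t i * st t (i + 5)%nat)
    (fun i => (Uof (st s) i - bvec (uof (st s)) i) / 4 * st s (i + 5)%nat
              + st s i * (- DK_u mu eps (st s) (unit_vec i))) s
    (fun i Hi => Derive.is_derive_mult _ _ _ _ _ (flow_u s i Hs Hi) (flow_U s i Hs Hi Hr))).
  apply (is_derive_scal _ _ (/ 2)) in H.
  unfold usq_rate, usq_accel.
  replace (sum4 (fun i => (Uof (st s) i - bvec (uof (st s)) i) / 4 * Uof (st s) i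
                          - uof (st s) i * DK_u mu eps (st s) (unit_vec i)) / 2)
    with (/ 2 * sum4 (fun i => (Uof (st s) i - bvec (uof (st s)) i) / 4 * st s (i + 5)%nat
              + st s i * (- DK_u mu eps (st s) (unit_vec i))))
    by (unfold sum4, Uof, uof; simpl; field).
  eapply is_derive_ext; [|exact H]. intros t. unfold sum4, Uof, uof. simpl. field.
Qed.

Lemma Gamma_derive s : s1 <= s <= s2 -> unorm2 (uof (st s)) < 1 ->
  is_derive (fun t => Gamma mu eps (phiof (st t)) (Phiof (st t))) s (Gamma_rate mu eps (st s)).
Proof.
  intros Hs Hr. destruct (regular_point _ Hr) as [_ HD].
  set (C := 3 - 4 * mu + mu^2).
  assert (Hc : is_derive (fun p => C / (2 * (1 + eps * cos p))) (phiof (st s))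
                 (C * eps * sin (phiof (st s)) / (2 * (1 + eps * cos (phiof (st s)))^2))).
  { auto_derive; [lra|]. field_R. exact HD. }
  assert (H := is_derive_plus _ _ _ _ _ (is_derive_opp _ _ _ (flow_Phi s Hs Hr))
                 (is_derive_comp _ _ _ _ _ Hc (flow_phi s Hs))).
  replace (Gamma_rate mu eps (st s)) with
    (- - DK_phi mu eps (st s) + unorm2 (uof (st s)) *
       (C * eps * sin (phiof (st s)) / (2 * (1 + eps * cos (phiof (st s)))^2))).
  - exact H.
  - unfold Gamma_rate. fold C. field. exact HD.
Qed.

End Regularized_flow.

(** * The transit through the Hill sphere *)

Lemma drift_budget mu rho g e L : 0 < rho -> rho^3 = mu -> 0 < e <= 1 ->
  20 * rho < g * e^2 -> 0 <= L -> mu * L^2 <= 32 * rho ->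
  9 * mu / e^2 * L <= g^2 / 2.
Proof.
  intros Hrho Hmu He Hsmall HL HmuL.
  assert (Hg : 0 < g * e^2) by lra.
  assert (H4 : rho^4 <= (g * e^2 / 20)^4) by (apply pow_incr; lra).
  assert (He4 : 0 < e^4 <= 1) by (split; [apply pow_lt; lra | rewrite <- (pow1 4); apply pow_incr; lra]).
  assert (Hsq : (18 * mu * L)^2 <= (g^2 * e^2)^2).
  { replace ((18 * mu * L)^2) with (324 * mu * (mu * L^2)) by ring.
    apply Rle_trans with (324 * mu * (32 * rho)); [apply Rmult_le_compat_l; nra|].
    rewrite <- Hmu.
    replace (324 * rho^3 * (32 * rho)) with (10368 * rho^4) by ring.
    replace ((g^2 * e^2)^2) with (g^4 * e^4) by ring.
    replace ((g * e^2 / 20)^4) with (g^4 * e^8 / 160000) in H4 by field.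
    assert (e^8 <= e^4) by (replace (e^8) with (e^4 * e^4) by ring; nra).
    assert (0 <= g^4) by (replace (g^4) with ((g^2)^2) by ring; apply pow2_ge_0).
    nra. }
  assert (H18 : 18 * mu * L <= g^2 * e^2).
  { apply Rsqr_incr_0_var; unfold Rsqr; [nra|]. nra. }
  apply (Rmult_le_reg_r (2 * e^2)); [nra|].
  replace (9 * mu / e^2 * L * (2 * e^2)) with (18 * mu * L) by (field; lra). nra.
Qed.

Section Transit.

Variables (mu eps s1 s2 rho : R) (st : R -> nat -> R).
Hypotheses (Hmu : 0 < mu < 1) (Heps : 0 < eps < 1).
Hypothesis Hsol : K_solution mu eps st s1 s2.
Hypothesis Hzero : forall s, s1 <= s <= s2 -> Kfun mu eps (st s) = 0.
Hypotheses (Hrho : 0 < rho <= 1/10) (Hrho3 : rho^3 = mu).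
Hypothesis Hinside : forall s, s1 <= s <= s2 -> unorm2 (uof (st s)) <= rho.

Local Notation Gam t := (Gamma mu eps (phiof (st t)) (Phiof (st t))).

Hypothesis HG0 : 0 < Gam s1.
Hypothesis Hsmall : 20 * rho < sqrt (Gam s1) * (1 - eps)^2.

Lemma transit_time_sq_le t : s1 <= t <= s2 ->
  (forall s, s1 <= s <= t -> Gam s1 / 4 <= Gam s) -> mu * (t - s1)^2 <= 32 * rho.
Proof.
  intros Ht Hlow.
  assert (Hreg : forall s, s1 <= s <= t -> unorm2 (uof (st s)) < 1)
    by (intros s Hs; specialize (Hinside s ltac:(lra)); lra).
  enough (mu / 4 * (t - s1)^2 <= 8 * rho) by lra.
  apply (sq_length_le_of_accel (fun s => unorm2 (uof (st s))) (fun s => usq_rate (st s))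
           (fun s => usq_accel mu eps (st s))); [lra | | | |].
  - intros s Hs. apply (usq_derive mu eps s1 s2); [assumption | lra].
  - intros s Hs. apply (usq_rate_derive mu eps s1 s2); [assumption | lra | lra | now apply Hreg].
  - intros s Hs. specialize (Hlow s Hs). specialize (Hinside s ltac:(lra)).
    pose proof (unorm2_ge0 (uof (st s))).
    apply usq_accel_lower; [lra | lra | lra | apply Hzero; lra |].
    assert (Hg : (20 * rho)^2 <= (sqrt (Gam s1) * (1 - eps)^2)^2) by (apply pow_incr; lra).
    replace ((sqrt (Gam s1) * (1 - eps)^2)^2) with (Gam s1 * (1 - eps)^4) in Hg
      by (rewrite Rpow_mult_distr, pow2_sqrt by lra; ring).
    assert ((1 - eps)^4 <= 1 - eps)
      by (replace ((1 - eps)^4) with ((1 - eps) * (1 - eps)^3) by ring;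
          assert ((1 - eps)^3 <= 1) by (rewrite <- (pow1 3); apply pow_incr; lra); nra).
    assert ((unorm2 (uof (st s)))^2 <= rho^2) by (apply pow_incr; lra).
    nra.
  - intros s Hs. split; [apply unorm2_ge0 | apply Hinside; lra].
Qed.

Lemma Gamma_drift t : s1 <= t <= s2 -> mu * (t - s1)^2 <= 32 * rho ->
  forall s, s1 <= s <= t -> Rabs (Gam s - Gam s1) <= Gam s1 / 2.
Proof.
  intros Ht Htime s Hs.
  eapply Rle_trans.
  - apply (increment_abs_bound (fun x => Gam x) (fun x => Gamma_rate mu eps (st x)) s1 s
             (9 * mu / (1 - eps)^2)); [lra | |].
    + intros x Hx. apply (Gamma_derive mu eps s1 s2); [assumption | lra | lra |].
      specialize (Hinside x ltac:(lra)). lra.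
    + intros x Hx. specialize (Hinside x ltac:(lra)). pose proof (unorm2_ge0 (uof (st x))).
      apply Gamma_rate_bound; try lra.
      rewrite <- Hrho3. apply pow_incr. lra.
  - rewrite <- (pow2_sqrt (Gam s1)) by lra.
    assert (H9 : 0 <= 9 * mu / (1 - eps)^2)
      by (apply Rle_mult_inv_pos; [lra | apply pow_lt; lra]).
    apply Rle_trans with (9 * mu / (1 - eps)^2 * (t - s1)); [apply Rmult_le_compat_l; lra|].
    apply (drift_budget mu rho); lra.
Qed.

Lemma Gamma_transit_bounds s : s1 <= s <= s2 -> Gam s1 / 2 <= Gam s <= 3 * Gam s1 / 2.
Proof.
  assert (Hstep : forall t, s1 <= t <= s2 -> (forall s, s1 <= s <= t -> Gam s1 / 4 <= Gam s) ->
            forall s, s1 <= s <= t -> Rabs (Gam s - Gam s1) <= Gam s1 / 2)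
    by (intros t Ht Hlow; exact (Gamma_drift t Ht (transit_time_sq_le t Ht Hlow))).
  assert (Hlow : forall s, s1 <= s <= s2 -> Gam s1 / 4 <= Gam s).
  { apply continuity_induction; [| lra |].
    - intros t Ht. apply (is_derive_continuity_pt _ _ (Gamma_rate mu eps (st t))).
      apply (Gamma_derive mu eps s1 s2); [assumption | lra | lra |].
      specialize (Hinside t Ht). lra.
    - intros t Ht Hlow x Hx.
      pose proof (proj1 (Rabs_le_between _ _) (Hstep t Ht Hlow x Hx)). lra. }
  intros Hs. pose proof (proj1 (Rabs_le_between _ _) (Hstep s2 ltac:(lra) Hlow s Hs)). lra.
Qed.

End Transit.

Lemma qnorm_KS mu (x u : nat -> R) :
  pi1 u = q1 mu x -> pi2 u = x 1%nat -> pi3 u = x 2%nat -> qnorm mu x = unorm2 u.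
Proof.
  intros E1 E2 E3. unfold qnorm. rewrite <- E1, <- E2, <- E3, pi_sq_sum.
  apply sqrt_pow2, unorm2_ge0.
Qed.

Lemma unorm2_le_of_qnorm_le mu eps (w : R -> nat -> R) (st : R -> nat -> R) s1 s2 rho :
  K_solution mu eps st s1 s2 ->
  (forall f, phiof (st s1) <= f <= phiof (st s2) -> qnorm mu (w f) <= rho) ->
  (forall s, s1 <= s <= s2 ->
     pi1 (uof (st s)) = q1 mu (w (phiof (st s))) /\
     pi2 (uof (st s)) = w (phiof (st s)) 1%nat /\
     pi3 (uof (st s)) = w (phiof (st s)) 2%nat) ->
  forall s, s1 <= s <= s2 -> unorm2 (uof (st s)) <= rho.
Proof.
  intros Hsol Hq HKS s Hs.
  destruct (HKS s Hs) as [E1 [E2 E3]].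
  rewrite <- (qnorm_KS mu _ _ E1 E2 E3).
  apply Hq, (flow_phi_range mu eps s1 s2 st Hsol s Hs).
Qed.

Lemma Rpower_third_cube x : 0 < x -> (Rpower x (1/3))^3 = x.
Proof.
  intros Hx. rewrite <- Rpower_pow by apply exp_pos.
  rewrite Rpower_mult. replace (1/3 * INR 3) with 1 by (simpl; field). apply Rpower_1, Hx.
Qed.

Lemma cube_lt_reg a b : 0 <= b -> a^3 < b^3 -> a < b.
Proof.
  intros Hb H. destruct (Rlt_or_le a b) as [|Hba]; [assumption|].
  pose proof (pow_incr b a 3 (conj Hb Hba)). lra.
Qed.

Lemma Rpower_three_halves x : 0 < x -> Rpower x (3/2) = x * sqrt x.
Proof.
  intros Hx. replace (3/2) with (1 + /2) by field.
  rewrite Rpower_plus, Rpower_1, Rpower_sqrt; auto.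
Qed.

Theorem mainTheorem4 :
  exists mu0 c : R, 0 < mu0 < / 10 /\ 0 < c /\
  forall mu eps : R, 0 < mu <= mu0 -> 0 < eps < 1 ->
  forall (w : R -> nat -> R) (f1 f2 : R) (st : R -> nat -> R) (s1 s2 : R),
    (* q = (x-1+mu, y, z) from an ER3BP solution transiting the Hill sphere *)
    f1 < f2 ->
    ER3BP_solution mu eps w f1 f2 ->
    qnorm mu (w f1) = Rpower mu (1 / 3) ->
    qnorm mu (w f2) = Rpower mu (1 / 3) ->
    (forall f, f1 < f < f2 -> 0 < qnorm mu (w f) < Rpower mu (1 / 3)) ->
    (* regularized solution on [s1,s2] *)
    s1 <= s2 ->
    K_solution mu eps st s1 s2 ->
    (forall s, s1 <= s <= s2 ->
       lfun (uof (st s)) (Uof (st s)) = 0 /\ Kfun mu eps (st s) = 0) ->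
    phiof (st s1) = f1 -> phiof (st s2) = f2 ->
    (forall s, s1 <= s <= s2 ->
       pi1 (uof (st s)) = q1 mu (w (phiof (st s))) /\
       pi2 (uof (st s)) = w (phiof (st s)) 1%nat /\
       pi3 (uof (st s)) = w (phiof (st s)) 2%nat) ->
    let Gamma0 := Gamma mu eps (phiof (st s1)) (Phiof (st s1)) in
    0 < Gamma0 ->
    mu < c * (1 - eps)^6 * Rpower Gamma0 (3 / 2) ->
    forall s, s1 <= s <= s2 ->
      Gamma0 / 2 <= Gamma mu eps (phiof (st s)) (Phiof (st s)) <= 3 * Gamma0 / 2.
Proof.
  (* mu0 = 10^-3 gives rho = mu^(1/3) <= 1/10, and c = 20^-3 turns the smallness
     condition into 20 rho < sqrt Gamma0 (1 - eps)^2. *)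
  exists (1/1000), (1/8000). split; [lra|]. split; [lra|].
  intros mu eps Hmu Heps w f1 f2 st s1 s2 _ _ Hq1 Hq2 Hqin _ Hsol Hzero Hphi1 Hphi2 HKS
    Gamma0 HG0 Hc.
  pose proof (Rpower_third_cube mu ltac:(lra)) as Hrho3.
  assert (Hrho0 : 0 < Rpower mu (1/3)) by apply exp_pos.
  set (rho := Rpower mu (1/3)) in *.
  assert (Hrho : rho <= 1/10) by (destruct (Rle_or_lt rho (1/10)); [assumption | nra]).
  rewrite Rpower_three_halves in Hc by assumption.
  assert (Hsmall : 20 * rho < sqrt Gamma0 * (1 - eps)^2).
  { apply cube_lt_reg; [apply Rmult_le_pos; [apply sqrt_pos | apply pow2_ge_0]|].
    replace ((sqrt Gamma0 * (1 - eps)^2)^3) with (Gamma0 * sqrt Gamma0 * (1 - eps)^6)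
      by (rewrite <- (pow2_sqrt Gamma0) at 1 by lra; ring).
    lra. }
  apply (Gamma_transit_bounds mu eps s1 s2 rho st); try lra; try assumption.
  - intros x Hx. apply Hzero, Hx.
  - apply (unorm2_le_of_qnorm_le mu eps w st s1 s2 rho Hsol); [|assumption].
    rewrite Hphi1, Hphi2. intros f Hf.
    destruct (Req_dec f f1) as [-> | Hf1]; [lra|].
    destruct (Req_dec f f2) as [-> | Hf2]; [lra|].
    specialize (Hqin f ltac:(lra)). lra.
Qed.
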